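(* Let $\ell$ be a linear space of real sequences endowed with a norm, quasi-norm or $\alpha$-norm, such that $\ell\hookrightarrow\ell^\infty$, and let $I\colon\ell\to\ell^\infty$ be the embedding operator. Suppose $$\|I\|\le\sigma_\ell<2\|I\|,$$ where $\sigma_\ell:=\sup_{y\in B_\ell}\big(\sup_{n\in\mathbb{N}}y_n-\inf_{n\in\mathbb{N}}y_n\big)$ is the span of $\ell$. Then $I$ is not maximally non-compact; moreover $\alpha(I)\le\sigma_\ell/2$.
   Context: $B_\ell$ is the closed unit ball of $\ell$; $\ell^\infty$ is the space of bounded sequences with the sup norm. $\ell\hookrightarrow\ell^\infty$ means $\ell\subset\ell^\infty$ as a linear subspace with $\|a\|_\infty\le C\|a\|_\ell$ for some constant $C$; $\|I\|=\sup_{y\in B_\ell}\|y\|_\infty$. For a bounded map $T\colon X\to Y$, the ball measure of non-compactness is $\alpha(T)=\inf\{r>0:\ T(B_X)\subset\bigcup_{i=1}^m (y_i+rB_Y)\text{ for some } m\in\mathbb{N},\ y_i\in Y\}$; $T$ is maximally non-compact if $\alpha(T)=\|T\|$. *)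

From HB Require Import structures.
From mathcomp Require Import all_boot all_order all_algebra.
From mathcomp Require Import all_classical all_reals.
From mathcomp Require Import exp.
Set Implicit Arguments. Unset Strict Implicit. Unset Printing Implicit Defensive.
Import Order.TTheory GRing.Theory Num.Theory.
Local Open Scope classical_set_scope.
Local Open Scope ring_scope.

Section SeqSpaces.
Variable R : realType.
Notation seqR := (nat -> R).

Definition bounded_seq (y : seqR) : Prop := exists M : R, forall n, `|y n| <= M.

Definition supnorm (y : seqR) : R := sup [set `|y n| | n in [set: nat]].
Definition seq_sup (y : seqR) : R := sup [set y n | n in [set: nat]].
Definition seq_inf (y : seqR) : R := inf [set y n | n in [set: nat]].

Definition linear_subspace (L : set seqR) : Prop :=
  L (fun _ => 0) /\
  (forall x y, L x -> L y -> L (fun n => x n + y n)) /\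
  (forall (a : R) x, L x -> L (fun n => a * x n)).

Definition definite_on (L : set seqR) (q : seqR -> R) : Prop :=
  (forall x, L x -> 0 <= q x) /\ (forall x, L x -> q x = 0 -> x = (fun _ => 0)).

Definition is_norm (L : set seqR) (q : seqR -> R) : Prop :=
  definite_on L q /\
  (forall (a : R) x, L x -> q (fun n => a * x n) = `|a| * q x) /\
  (forall x y, L x -> L y -> q (fun n => x n + y n) <= q x + q y).

Definition is_quasinorm (L : set seqR) (q : seqR -> R) : Prop :=
  definite_on L q /\
  (forall (a : R) x, L x -> q (fun n => a * x n) = `|a| * q x) /\
  exists K : R, 1 <= K /\
    (forall x y, L x -> L y -> q (fun n => x n + y n) <= K * (q x + q y)).

Definition is_alpha_norm (L : set seqR) (q : seqR -> R) : Prop :=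
  definite_on L q /\
  exists al : R, 0 < al /\ al <= 1 /\
    (forall (a : R) x, L x -> q (fun n => a * x n) = (`|a| `^ al) * q x) /\
    (forall x y, L x -> L y -> q (fun n => x n + y n) <= q x + q y).

Definition embeds_linfty (L : set seqR) (q : seqR -> R) : Prop :=
  (forall y, L y -> bounded_seq y) /\
  exists C : R, forall y, L y -> supnorm y <= C * q y.

Definition unit_ball (L : set seqR) (q : seqR -> R) : set seqR :=
  [set y | L y /\ q y <= 1].

Definition emb_norm (L : set seqR) (q : seqR -> R) : R :=
  sup [set supnorm y | y in unit_ball L q].

Definition span_l (L : set seqR) (q : seqR -> R) : R :=
  sup [set seq_sup y - seq_inf y | y in unit_ball L q].

Definition alpha_I (L : set seqR) (q : seqR -> R) : R :=
  inf [set r : R | 0 < r /\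
    exists (m : nat) (c : 'I_m -> seqR),
      (forall i, bounded_seq (c i)) /\
      (forall y, unit_ball L q y ->
         exists i : 'I_m, supnorm (fun n => y n - c i n) <= r)].

Definition maximally_noncompact_I (L : set seqR) (q : seqR -> R) : Prop :=
  alpha_I L q = emb_norm L q.

End SeqSpaces.

From mathcomp Require Import all_boot all_order all_algebra.
From mathcomp Require Import all_classical all_reals.
From mathcomp Require Import ring lra.
Set Implicit Arguments. Unset Strict Implicit. Unset Printing Implicit Defensive.
Import Order.TTheory GRing.Theory Num.Theory.
Local Open Scope ring_scope.
Local Open Scope classical_set_scope.

(* Every y in the unit ball takes its values in [inf y, sup y], an interval of
   length at most sigma inside [-||I||, ||I||].  A finite e-grid of constants in
   [-||I||, ||I||] contains a point within e below the midpoint of that interval,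
   hence within sigma/2 + e of y in sup norm.  So alpha(I) <= sigma/2 < ||I||. *)

Section BoundedSequence.
Variables (R : realType) (y : nat -> R).
Hypothesis y_bounded : bounded_seq y.

Lemma norm_le_supnorm n : `|y n| <= supnorm y.
Proof.
have [B yB] := y_bounded.
by apply: ub_le_sup; [exists B => _ [m _ <-] | exists n].
Qed.

Lemma le_seq_sup n : y n <= seq_sup y.
Proof.
have [B yB] := y_bounded; apply: ub_le_sup; last by exists n.
by exists B => _ [m _ <-]; apply: le_trans (yB m); apply: ler_norm.
Qed.

Lemma seq_inf_le n : seq_inf y <= y n.
Proof.
have [B yB] := y_bounded; apply: ge_inf; last by exists n.
by exists (- B) => _ [m _ <-]; have := yB m; rewrite ler_norml => /andP[].
Qed.

Lemma seq_sup_le_supnorm : seq_sup y <= supnorm y.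
Proof.
apply: ge_sup; first by exists (y 0%N); exists 0%N.
by move=> _ [n _ <-]; apply: le_trans (norm_le_supnorm n); apply: ler_norm.
Qed.

Lemma supnormN_le_seq_inf : - supnorm y <= seq_inf y.
Proof.
apply: lb_le_inf; first by exists (y 0%N); exists 0%N.
by move=> _ [n _ <-]; have := norm_le_supnorm n; rewrite ler_norml => /andP[].
Qed.

End BoundedSequence.

Lemma supnorm_le (R : realType) (y : nat -> R) (r : R) :
  (forall n, `|y n| <= r) -> supnorm y <= r.
Proof.
move=> yr; apply: ge_sup; first by exists `|y 0%N|; exists 0%N.
by move=> _ [n _ <-].
Qed.

Lemma supnorm_sub_cst_le (R : realType) (y : nat -> R) (c e : R) :
  bounded_seq y -> c <= (seq_sup y + seq_inf y) / 2 < c + e ->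
  supnorm (fun n => y n - c) <= (seq_sup y - seq_inf y) / 2 + e.
Proof.
move=> y_bounded /andP[c_le lt_ce]; apply: supnorm_le => n.
have := le_seq_sup y_bounded n; have := seq_inf_le y_bounded n.
by rewrite ler_norml => ? ?; apply/andP; split; lra.
Qed.

Lemma grid_point (R : realType) (M e x : R) : 0 < e -> - M <= x <= M ->
  exists k : 'I_(Num.truncn (2 * M / e)).+1,
    - M + k%:R * e <= x < - M + k%:R * e + e.
Proof.
move=> e_gt0 /andP[Mx xM]; set t := (x + M) / e.
have t_ge0 : 0 <= t by rewrite divr_ge0 //; [lra | exact: ltW].
have t_le : t <= 2 * M / e by apply: ler_wpM2r; [rewrite invr_ge0 ltW | lra].
have k_lt : (Num.truncn t < (Num.truncn (2 * M / e)).+1)%N.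
  by rewrite ltnS le_truncn.
exists (Ordinal k_lt) => /=.
have tk : (Num.truncn t)%:R <= t by rewrite truncn_le.
have kt : t < (Num.truncn t)%:R + 1 by rewrite natr1 truncnS_gt.
have te : t * e = x + M by rewrite /t; field; lra.
by apply/andP; split; nra.
Qed.

Section EmbeddingIntoLinfty.
Variables (R : realType) (L : set (nat -> R)) (q : (nat -> R) -> R).
Hypothesis q_ge0 : forall x, L x -> 0 <= q x.
Hypothesis L_embeds : embeds_linfty L q.

Lemma unit_ball_bounded y : unit_ball L q y -> bounded_seq y.
Proof. by case: L_embeds => Lbd _ [Ly _]; apply: Lbd. Qed.

Lemma unit_ball_supnorm_ub : exists C, forall y, unit_ball L q y -> supnorm y <= C.
Proof.
have [_ [C hC]] := L_embeds; exists `|C| => y [Ly qy1].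
apply: le_trans (hC y Ly) _; have := q_ge0 Ly.
by case: (lerP 0 C) => C0; [rewrite ger0_norm | rewrite ltr0_norm] => // ?; nra.
Qed.

Lemma supnorm_le_emb_norm y : unit_ball L q y -> supnorm y <= emb_norm L q.
Proof.
have [C hC] := unit_ball_supnorm_ub.
by move=> yB; apply: ub_le_sup; [exists C => _ [z zB <-]; apply: hC | exists y].
Qed.

Lemma oscillation_le_span y :
  unit_ball L q y -> seq_sup y - seq_inf y <= span_l L q.
Proof.
have [C hC] := unit_ball_supnorm_ub.
move=> yB; apply: ub_le_sup; last by exists y.
exists (2 * C) => _ [z zB <-]; have zbd := unit_ball_bounded zB.
have := seq_sup_le_supnorm zbd; have := supnormN_le_seq_inf zbd; have := hC z zB.
lra.
Qed.

Lemma span_l_ge0 : 0 <= span_l L q.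
Proof.
have [[y yB]|no_y] := pselect (exists y, unit_ball L q y).
  apply: le_trans (oscillation_le_span yB); have ybd := unit_ball_bounded yB.
  by have := le_seq_sup ybd 0; have := seq_inf_le ybd 0; lra.
rewrite /span_l; suff -> : [set seq_sup y - seq_inf y | y in unit_ball L q] = set0.
  by rewrite sup0.
by apply/seteqP; split => // x [y yB _]; apply: no_y; exists y.
Qed.

Lemma alpha_I_le_half_span : alpha_I L q <= span_l L q / 2.
Proof.
apply/ler_addgt0Pr => e e_gt0; set M := emb_norm L q.
apply: ge_inf; first by exists 0 => r [/ltW].
split; first by have := span_l_ge0; lra.
exists (Num.truncn (2 * M / e)).+1, (fun k => fun=> - M + k%:R * e).
split; first by move=> k; exists `|- M + k%:R * e|.
move=> y yB; have ybd := unit_ball_bounded yB.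
have mid_in : - M <= (seq_sup y + seq_inf y) / 2 <= M.
  have := supnorm_le_emb_norm yB; have := seq_sup_le_supnorm ybd.
  have := supnormN_le_seq_inf ybd; have := le_seq_sup ybd 0; have := seq_inf_le ybd 0.
  by rewrite -/M => *; apply/andP; split; lra.
have [k /(supnorm_sub_cst_le ybd) yk] := grid_point e_gt0 mid_in.
exists k; apply: le_trans yk _.
by have := oscillation_le_span yB; lra.
Qed.

End EmbeddingIntoLinfty.

Theorem mainTheorem3 (R : realType) (L : set (nat -> R)) (q : (nat -> R) -> R) :
  linear_subspace L ->
  is_norm L q \/ is_quasinorm L q \/ is_alpha_norm L q ->
  embeds_linfty L q ->
  emb_norm L q <= span_l L q ->
  span_l L q < 2 * emb_norm L q ->
  ~ maximally_noncompact_I L q /\ alpha_I L q <= span_l L q / 2.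
Proof.
move=> _ q_norm L_embeds _ span_lt.
have q_ge0 : forall x, L x -> 0 <= q x by case: q_norm => [[[]]|[[[]]|[[]]]].
have alpha_le := alpha_I_le_half_span q_ge0 L_embeds.
split => // alpha_eq; rewrite /maximally_noncompact_I in alpha_eq.
by move: alpha_le; rewrite alpha_eq; lra.
Qed.
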